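(* Let $\Gamma$ be a connected $\delta$-hyperbolic graph with base vertex $x_0$, and let $x\in\Gamma$ and $n\le\ell(x)$. Let $p\in V(x,B_n)$, let $x_0,x_1,\ldots,x_{\ell(x)}$ be a geodesic from $x_0$ to $x$, and let $p_0,p_1,\ldots,p_n$ be a geodesic from $x_0$ to $p$. Then $d(x_i,p_i)\le4\delta+2$ for all $0\le i\le n$.
   Context: $\Gamma$ is identified with its vertex set with path metric $d$. It is $\delta$-hyperbolic if for every geodesic triangle with sides $[a,b],[a,c],[b,c]$ and every vertex $v\in[a,b]$ there is a vertex $w\in[a,c]\cup[b,c]$ with $d(v,w)\le\delta$. Set $\ell(x)=d(x_0,x)$ and $B_n=\{x:\ell(x)\le n\}$. For finite $B\subseteq\Gamma$ and $x\in\Gamma$, a point $p\in B$ is visible from $x$ if $d(p,x)<d(p,q)+d(q,x)$ for all $q\in B\setminus\{p\}$; $V(x,B)$ denotes the set of such points. *)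

From Stdlib Require Import Arith Lia ClassicalEpsilon.

Definition simple_graph {V : Type} (adj : V -> V -> Prop) : Prop :=
  (forall x y, adj x y -> adj y x) /\ (forall x, ~ adj x x).

Inductive walk {V : Type} (adj : V -> V -> Prop) : V -> V -> nat -> Prop :=
| walk_nil : forall x, walk adj x x 0
| walk_cons : forall x z y n, adj x z -> walk adj z y n -> walk adj x y (S n).

Definition connected {V : Type} (adj : V -> V -> Prop) : Prop :=
  forall x y, exists n, walk adj x y n.

(* Path metric: the least length of a walk from x to y (0 if none exists;
   irrelevant for connected graphs). *)
Definition dist {V : Type} (adj : V -> V -> Prop) (x y : V) : nat :=
  epsilon (inhabits 0)
    (fun n => walk adj x y n /\ forall m, walk adj x y m -> n <= m).

Definition geodesic {V : Type} (adj : V -> V -> Prop)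
    (g : nat -> V) (a b : V) (m : nat) : Prop :=
  g 0 = a /\ g m = b /\ m = dist adj a b /\
  (forall i, i < m -> adj (g i) (g (S i))).

(* delta-hyperbolicity via thin geodesic triangles (vertex version). *)
Definition hyperbolic {V : Type} (adj : V -> V -> Prop) (delta : nat) : Prop :=
  forall (a b c : V) (gab gac gbc : nat -> V),
    geodesic adj gab a b (dist adj a b) ->
    geodesic adj gac a c (dist adj a c) ->
    geodesic adj gbc b c (dist adj b c) ->
    forall i, i <= dist adj a b ->
      exists w : V,
        ((exists j, j <= dist adj a c /\ w = gac j) \/
         (exists j, j <= dist adj b c /\ w = gbc j)) /\
        dist adj (gab i) w <= delta.

Definition ball {V : Type} (adj : V -> V -> Prop) (x0 : V) (n : nat) : V -> Prop :=
  fun y => dist adj x0 y <= n.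

Definition visible {V : Type} (adj : V -> V -> Prop) (x : V) (B : V -> Prop) (p : V) : Prop :=
  B p /\ forall q, B q -> q <> p -> dist adj p x < dist adj p q + dist adj q x.

(* Let gb be a geodesic from p to x.  Every vertex of gb other than p lies
   outside B_n, for otherwise it would block the view of x from p.  So in the
   thin triangle (x0, p, x), a vertex gp i with i + delta < n cannot be
   delta-close to gb, hence is delta-close to some gx j; then |i - j| <= delta
   and d(gx i, gp i) <= 2 delta.  For the last delta + 1 indices one moves
   along both geodesics from k = n - delta - 1, losing at most 2 (i - k). *)

From Stdlib Require Import Arith Lia Classical ClassicalEpsilon.

Section PathMetric.

Variables (V : Type) (adj : V -> V -> Prop).
Hypothesis adj_sym : forall x y, adj x y -> adj y x.
Hypothesis Hconn : connected adj.

Local Notation d := (dist adj).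

Lemma walk_cat x y z a b : walk adj x y a -> walk adj y z b -> walk adj x z (a + b).
Proof. induction 1; intros; simpl; [assumption | econstructor; eauto]. Qed.

Lemma walk_rcons x y z n : walk adj x y n -> adj y z -> walk adj x z (S n).
Proof.
  intros Hxy Hyz. rewrite <- Nat.add_1_r.
  apply walk_cat with y; [assumption | econstructor; eauto; constructor].
Qed.

Lemma walk_rev x y n : walk adj x y n -> walk adj y x n.
Proof. induction 1; [constructor | eapply walk_rcons; eauto]. Qed.

Lemma dist_spec x y : walk adj x y (d x y) /\ forall m, walk adj x y m -> d x y <= m.
Proof.
  unfold dist. apply epsilon_spec. destruct (Hconn x y) as [n Hn]. revert Hn.
  induction n as [n IH] using (well_founded_induction lt_wf). intro Hn.
  destruct (classic (forall m, walk adj x y m -> n <= m)) as [Hmin | Hnot].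
  - exists n; auto.
  - apply not_all_ex_not in Hnot as [m Hm].
    apply imply_to_and in Hm as [Hwm Hlt]. apply (IH m); auto; lia.
Qed.

Lemma dist_walk x y : walk adj x y (d x y).
Proof. apply dist_spec. Qed.

Lemma dist_le_walk x y m : walk adj x y m -> d x y <= m.
Proof. apply dist_spec. Qed.

Lemma dist_triangle x y z : d x z <= d x y + d y z.
Proof. apply dist_le_walk, walk_cat with y; apply dist_walk. Qed.

Lemma dist_sym x y : d x y = d y x.
Proof. apply Nat.le_antisymm; apply dist_le_walk, walk_rev, dist_walk. Qed.

Lemma dist_self x : d x x = 0.
Proof. pose proof (dist_le_walk x x 0 (walk_nil adj x)); lia. Qed.

Lemma walk_of_path (g : nat -> V) m :
  (forall i, i < m -> adj (g i) (g (S i))) ->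
  forall k i, i + k <= m -> walk adj (g i) (g (i + k)) k.
Proof.
  intros Hg. induction k as [|k IH]; intros i Hik.
  - rewrite Nat.add_0_r. constructor.
  - rewrite Nat.add_succ_r. apply walk_rcons with (g (i + k)); [apply IH | apply Hg]; lia.
Qed.

Lemma path_dist_le (g : nat -> V) m :
  (forall i, i < m -> adj (g i) (g (S i))) ->
  forall i j, i <= m -> j <= m -> d (g i) (g j) <= (j - i) + (i - j).
Proof.
  intros Hg. enough (Hle : forall i j, i <= j -> j <= m -> d (g i) (g j) <= j - i).
  { intros i j Hi Hj. destruct (le_ge_dec i j) as [Hij | Hji].
    - specialize (Hle i j Hij Hj); lia.
    - rewrite dist_sym. specialize (Hle j i Hji Hi); lia. }
  intros i j Hij Hj. apply dist_le_walk.
  replace j with (i + (j - i)) at 1 by lia. apply (walk_of_path g m Hg); lia.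
Qed.

Lemma geodesic_dist_start g a b m :
  geodesic adj g a b m -> forall j, j <= m -> d a (g j) = j.
Proof.
  intros (Hg0 & Hgm & Hm & Hg) j Hj.
  pose proof (path_dist_le g m Hg 0 j ltac:(lia) Hj) as Hstart.
  pose proof (path_dist_le g m Hg j m Hj ltac:(lia)) as Hend.
  pose proof (dist_triangle a (g j) b).
  rewrite Hg0 in Hstart. rewrite Hgm in Hend. lia.
Qed.

Lemma geodesic_dist_end g a b m :
  geodesic adj g a b m -> forall j, j <= m -> d (g j) b <= m - j.
Proof.
  intros (Hg0 & Hgm & Hm & Hg) j Hj.
  pose proof (path_dist_le g m Hg j m Hj ltac:(lia)). rewrite Hgm in *. lia.
Qed.

Lemma path_of_walk x y n : walk adj x y n ->
  exists g : nat -> V, g 0 = x /\ g n = y /\ forall i, i < n -> adj (g i) (g (S i)).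
Proof.
  induction 1 as [x | x z y n Hxz _ (g & Hg0 & Hgn & Hg)].
  - exists (fun _ => x). repeat split; intros; lia.
  - exists (fun i => match i with 0 => x | S k => g k end).
    repeat split; auto. intros [|i] Hi; [rewrite Hg0; auto | apply Hg; lia].
Qed.

Lemma geodesic_exists a b : exists g, geodesic adj g a b (d a b).
Proof.
  destruct (path_of_walk a b _ (dist_walk a b)) as (g & Hg0 & Hgn & Hg).
  exists g. repeat split; auto.
Qed.

Lemma visible_geodesic_outside x (B : V -> Prop) p g :
  visible adj x B p -> geodesic adj g p x (d p x) ->
  forall j, 0 < j <= d p x -> ~ B (g j).
Proof.
  intros [_ Hvis] Hg j Hj HB.
  pose proof (geodesic_dist_start g p x _ Hg j ltac:(lia)) as Hpj.
  pose proof (geodesic_dist_end g p x _ Hg j ltac:(lia)) as Hjx.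
  assert (Hne : g j <> p) by (intros E; rewrite E, dist_self in Hpj; lia).
  specialize (Hvis (g j) HB Hne). lia.
Qed.

(* u and g j are delta-close, so their distances i and j from a differ by at
   most delta. *)
Lemma geodesic_close_point g a b m u i j delta :
  geodesic adj g a b m -> i <= m -> j <= m -> d a u = i ->
  d (g j) u <= delta -> d (g i) u <= 2 * delta.
Proof.
  intros Hg Hi Hj Hu Hclose.
  pose proof (geodesic_dist_start g a b m Hg j Hj).
  pose proof (dist_triangle a u (g j)).
  pose proof (dist_triangle a (g j) u).
  rewrite (dist_sym u (g j)) in *.
  pose proof (path_dist_le g m (proj2 (proj2 (proj2 Hg))) i j Hi Hj).
  pose proof (dist_triangle (g i) (g j) u). lia.
Qed.

Lemma geodesics_diverge_linearly g g' a b b' m m' k i c :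
  geodesic adj g a b m -> geodesic adj g' a b' m' ->
  k <= i -> i <= m -> i <= m' -> d (g k) (g' k) <= c ->
  d (g i) (g' i) <= c + 2 * (i - k).
Proof.
  intros (_ & _ & _ & Hg) (_ & _ & _ & Hg') Hki Him Him' Hk.
  pose proof (path_dist_le g m Hg i k ltac:(lia) ltac:(lia)).
  pose proof (path_dist_le g' m' Hg' k i ltac:(lia) ltac:(lia)).
  pose proof (dist_triangle (g i) (g k) (g' i)).
  pose proof (dist_triangle (g k) (g' k) (g' i)). lia.
Qed.

Lemma visible_geodesic_far x0 x n p g :
  visible adj x (ball adj x0 n) p -> d x0 p = n -> geodesic adj g p x (d p x) ->
  forall j, j <= d p x -> n <= d x0 (g j).
Proof.
  intros Hp Hpn Hg [|j] Hj.
  - destruct Hg as (-> & _). lia.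
  - apply Nat.nlt_ge. intros Hnear.
    apply (visible_geodesic_outside x _ p g Hp Hg (S j)); [lia | unfold ball; lia].
Qed.

(* The triangle (x0, p, x) is thin, and gp i is too close to x0 to be
   delta-close to the side from p to x. *)
Lemma visible_geodesics_close_early delta x0 x n p gx gp i :
  hyperbolic adj delta -> visible adj x (ball adj x0 n) p -> n <= d x0 x ->
  geodesic adj gx x0 x (d x0 x) -> geodesic adj gp x0 p n ->
  i + delta < n -> d (gx i) (gp i) <= 2 * delta.
Proof.
  intros Hhyp Hp Hn Hgx Hgp Hi.
  pose proof Hgp as (_ & _ & Hnp & _).
  assert (Hgp' : geodesic adj gp x0 p (d x0 p)) by (rewrite <- Hnp; exact Hgp).
  pose proof (geodesic_dist_start gp x0 p n Hgp i ltac:(lia)) as Hgpi.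
  destruct (geodesic_exists p x) as [gb Hgb].
  destruct (Hhyp x0 p x gp gx gb Hgp' Hgx Hgb i ltac:(lia))
    as [w [[[j [Hj ->]] | [j [Hj ->]]] Hw]].
  - rewrite dist_sym in Hw.
    apply (geodesic_close_point gx x0 x _ (gp i) i j delta Hgx); assumption || lia.
  - pose proof (visible_geodesic_far x0 x n p gb Hp (eq_sym Hnp) Hgb j Hj).
    pose proof (dist_triangle x0 (gp i) (gb j)). lia.
Qed.

End PathMetric.

Theorem mainTheorem16 (V : Type) (adj : V -> V -> Prop) (delta : nat) (x0 : V)
  (Hsimple : simple_graph adj) (Hconn : connected adj) (Hhyp : hyperbolic adj delta)
  (x : V) (n : nat) (Hn : n <= dist adj x0 x)
  (p : V) (Hp : visible adj x (ball adj x0 n) p)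
  (gx : nat -> V) (Hgx : geodesic adj gx x0 x (dist adj x0 x))
  (gp : nat -> V) (Hgp : geodesic adj gp x0 p n) :
  forall i, i <= n -> dist adj (gx i) (gp i) <= 4 * delta + 2.
Proof.
  destruct Hsimple as [Hsym _].
  pose proof (visible_geodesics_close_early V adj Hsym Hconn delta x0 x n p gx gp)
    as Hearly.
  intros i Hi.
  destruct (le_lt_dec n (i + delta)) as [Hlate | Hi_early];
    [| specialize (Hearly i Hhyp Hp Hn Hgx Hgp Hi_early); lia].
  destruct (le_lt_dec n delta) as [Hshort | Hlong].
  - assert (Hstart : dist adj (gx 0) (gp 0) <= 0).
    { destruct Hgx as (-> & _), Hgp as (-> & _). rewrite dist_self by assumption. lia. }
    pose proof (geodesics_diverge_linearly V adj Hsym Hconn gx gp x0 x p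
      (dist adj x0 x) n 0 i 0 Hgx Hgp ltac:(lia) ltac:(lia) Hi Hstart). lia.
  - pose proof (geodesics_diverge_linearly V adj Hsym Hconn gx gp x0 x p
      (dist adj x0 x) n (n - delta - 1) i (2 * delta) Hgx Hgp ltac:(lia) ltac:(lia) Hi
      (Hearly (n - delta - 1) Hhyp Hp Hn Hgx Hgp ltac:(lia))). lia.
Qed.
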